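(* Let $m\geq\beta\geq 1$ be integers and let $G^*$ be a graph with maximum $q$ among all graphs in $\mathfrak{G}_{m,\geq\beta}$. Let $X^*$ be a principal eigenvector of $Q(G^* )$ with coordinates $x^*_v$, let $M^*(G^* )$ be a matching of $G^*$ extremal to $X^*$, and let $u_1v_1,u_2v_2,\ldots,u_kv_k$ ($k=\beta(G^* )$) be an ordering of $M^*(G^* )$ proper to $X^*$. Suppose $\beta(G^* )\geq 2$ and let $i,j\in\{1,\ldots,k\}$ with $i<j$. Then $x^*_{u_i}\geq x^*_{v_j}$ if and only if the subgraph of $G^*$ induced by $\{u_i,v_i,u_j,v_j\}$ is either two disjoint edges ($2K_2$) or a complete graph $K_4$.
   Context: All graphs are finite, simple and undirected (isolated vertices allowed). $Q(G)=D(G)+A(G)$ is the signless Laplacian matrix and $q(G)$ its largest eigenvalue; a principal eigenvector of $Q(G)$ is a nonnegative unit vector $X$ with $Q(G)X=q(G)X$. $\beta(G)$ is the matching number. $\mathfrak{G}_{m,\geq\beta}$ is the set of graphs with exactly $m$ edges and matching number at least $\beta$. For a graph $G$ with at least one edge and a principal eigenvector $X$ (coordinates $x_v$), a matching $M^*(G)$ is extremal to $X$ if it is a maximum matching and $\sum_{uv\in M^*(G)}(x_u+x_v)^2=\max_M\sum_{uv\in M}(x_u+x_v)^2$ over all maximum matchings $M$. An ordering $u_1v_1,\ldots,u_kv_k$ of the edges of $M^*(G^* )$ (with a designated labelling of the endpoints of each edge) is proper to $X^*$ if for each $i$: (i) $x^*_{v_i}\geq x^*_{u_i}$; (ii) $x^*_{v_i}\geq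 x^*_{v_{i+1}}$ (for $i<k$); (iii) $x^*_{u_i}\geq x^*_{u_{i+1}}$ whenever $x^*_{v_i}=x^*_{v_{i+1}}$ (for $i<k$). *)

From HB Require Import structures.
From mathcomp Require Import all_boot all_order all_algebra.
From mathcomp Require Import reals.
Set Implicit Arguments. Unset Strict Implicit. Unset Printing Implicit Defensive.
Import Order.TTheory GRing.Theory Num.Theory.
Local Open Scope ring_scope.

Definition simple_graph (T : finType) (e : rel T) : Prop :=
  symmetric e /\ irreflexive e.

Definition edges (T : finType) (e : rel T) : {set {set T}} :=
  [set E : {set T} | [exists x : T, exists y : T, e x y && (E == [set x; y])]].

Definition degree (T : finType) (e : rel T) (x : T) : nat := #|[set y | e x y]|.

Definition matching (T : finType) (e : rel T) (M : {set {set T}}) : bool :=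
  (M \subset edges e) && trivIset M.

Definition matching_number (T : finType) (e : rel T) : nat :=
  \max_(M : {set {set T}} | matching e M) #|M|.

Definition max_matching (T : finType) (e : rel T) (M : {set {set T}}) : bool :=
  matching e M && (#|M| == matching_number e).

Definition sQ (R : realType) (n : nat) (e : rel 'I_n) : 'M[R]_n :=
  diag_mx (\row_i (degree e i)%:R) + \matrix_(i, j) (e i j)%:R.

Definition is_q (R : realType) (n : nat) (e : rel 'I_n) (lam : R) : Prop :=
  eigenvalue (sQ R e) lam /\ forall mu, eigenvalue (sQ R e) mu -> mu <= lam.

Definition principal_eigvec (R : realType) (n : nat) (e : rel 'I_n)
    (q : R) (X : 'cV[R]_n) : Prop :=
  [/\ forall i, 0 <= X i 0, \sum_i X i 0 ^+ 2 = 1 & sQ R e *m X = q *: X].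

Definition mweight (R : realType) (n : nat) (X : 'cV[R]_n)
    (M : {set {set 'I_n}}) : R :=
  \sum_(E in M) (\sum_(w in E) X w 0) ^+ 2.

Definition extremal_matching (R : realType) (n : nat) (e : rel 'I_n)
    (X : 'cV[R]_n) (M : {set {set 'I_n}}) : Prop :=
  max_matching e M /\
  forall M', max_matching e M' -> mweight X M' <= mweight X M.

Definition proper_ordering (R : realType) (n k : nat) (X : 'cV[R]_n)
    (M : {set {set 'I_n}}) (u v : 'I_k -> 'I_n) : Prop :=
  [/\ M = [set [set u i; v i] | i : 'I_k],
      forall i, X (u i) 0 <= X (v i) 0 &
      forall i j : 'I_k, val j = (val i).+1 ->
        X (v j) 0 <= X (v i) 0 /\
        (X (v i) 0 = X (v j) 0 -> X (u j) 0 <= X (u i) 0)].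

Definition induced_edges (T : finType) (e : rel T) (S : {set T}) :
  {set {set T}} := [set E in edges e | E \subset S].

Definition is_2K2 (T : finType) (e : rel T) (S : {set T}) : bool :=
  [&& #|S| == 4, #|induced_edges e S| == 2 & trivIset (induced_edges e S)].

Definition is_K4 (T : finType) (e : rel T) (S : {set T}) : bool :=
  (#|S| == 4) && (#|induced_edges e S| == 6).

From HB Require Import structures.
From mathcomp Require Import all_boot all_order all_algebra.
From mathcomp Require Import reals perm ring lra.
From mathcomp Require classical_sets.
Set Implicit Arguments. Unset Strict Implicit. Unset Printing Implicit Defensive.
Import Order.TTheory GRing.Theory Num.Theory.
Local Open Scope ring_scope.

(* q(G) is the maximum of the Rayleigh quotient X^T Q X = sum_(uv in E) (x_u + x_v)^2
   over unit vectors X.  Moving an edge yt of the extremal graph to ys with x_t <= x_s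
   keeps m edges and, when a matching of size beta survives, cannot increase q; since
   it does not decrease the Rayleigh quotient at X^*, the vector X^* stays a principal
   eigenvector and comparing the t-rows of both signless Laplacians gives
   x_y = x_t = x_s = 0.  If x_{v_j} <= x_{u_i}, any mixed pattern of the four edges
   between u_i v_i and u_j v_j allows such a move, so these edges are all present or
   all absent.  If x_{u_i} < x_{v_j}, then also x_{u_j} < x_{v_i}, and exchanging
   u_i v_i, u_j v_j for u_i u_j, v_i v_j raises sum (x_u + x_v)^2 by
   2 (x_{v_i} - x_{u_j}) (x_{v_j} - x_{u_i}) > 0: in a 2K_2 this produces an admissible
   graph with larger q, in a K_4 a maximum matching of larger weight. *)

(** * Rayleigh quotients of symmetric positive semidefinite matrices *)

Lemma discriminant_le (R : realFieldType) (p r w : R) : 0 <= w ->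
  (forall t, 0 <= p + 2 * t * r + t ^+ 2 * w) -> r ^+ 2 <= p * w.
Proof.
move=> w_ge0 nonneg.
have [w0|w_neq0] := eqVneq w 0.
  rewrite w0 mulr0 in nonneg *; have [->|r_neq0] := eqVneq r 0; first by rewrite expr0n.
  have := nonneg (- (p + 1) / (2 * r)).
  have -> : p + 2 * (- (p + 1) / (2 * r)) * r + (- (p + 1) / (2 * r)) ^+ 2 * 0 = -1.
    by field; rewrite r_neq0.
  by rewrite ler0N1.
have w_gt0 : 0 < w by rewrite lt_def w_neq0 w_ge0.
have := nonneg (- r / w).
have -> : p + 2 * (- r / w) * r + (- r / w) ^+ 2 * w = (p * w - r ^+ 2) / w by field.
by rewrite pmulr_lge0 ?invr_gt0 // subr_ge0.
Qed.

Section Dot.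
Variables (R : realFieldType) (n : nat).
Implicit Types (Y Z : 'cV[R]_n) (A B : 'M[R]_n).

Definition dot Y Z : R := \sum_i Y i 0 * Z i 0.

Lemma dotC Y Z : dot Y Z = dot Z Y.
Proof. by apply: eq_bigr => i _; rewrite mulrC. Qed.

Lemma dotDl Y1 Y2 Z : dot (Y1 + Y2) Z = dot Y1 Z + dot Y2 Z.
Proof. by rewrite /dot -big_split; apply: eq_bigr => i _; rewrite mxE mulrDl. Qed.

Lemma dotZl a Y Z : dot (a *: Y) Z = a * dot Y Z.
Proof. by rewrite /dot mulr_sumr; apply: eq_bigr => i _; rewrite mxE mulrA. Qed.

Lemma dotDr Y Z1 Z2 : dot Y (Z1 + Z2) = dot Y Z1 + dot Y Z2.
Proof. by rewrite dotC dotDl !(dotC _ Y). Qed.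

Lemma dotZr a Y Z : dot Y (a *: Z) = a * dot Y Z.
Proof. by rewrite dotC dotZl dotC. Qed.

Lemma dot0r Y : dot Y 0 = 0.
Proof. by rewrite /dot big1 // => i _; rewrite mxE mulr0. Qed.

Lemma dot_ge0 Y : 0 <= dot Y Y.
Proof. by rewrite /dot sumr_ge0 // => i _; rewrite -expr2 sqr_ge0. Qed.

Lemma dot_eq0 Y : dot Y Y = 0 -> Y = 0.
Proof.
move=> /eqP; rewrite psumr_eq0 => [/allP Y0|i _]; last by rewrite -expr2 sqr_ge0.
apply/matrixP => i j; rewrite (ord1 j) mxE.
by have := Y0 i (mem_index_enum i); rewrite /= mulf_eq0 orbb => /eqP.
Qed.

Lemma dot_sym A Y Z : A^T = A -> dot Y (A *m Z) = dot (A *m Y) Z.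
Proof.
move=> symA; rewrite /dot.
under eq_bigr => i _ do rewrite mxE mulr_sumr.
rewrite exchange_big /=; apply: eq_bigr => j _.
rewrite mxE mulr_suml; apply: eq_bigr => i _.
by rewrite -[in A i j]symA mxE mulrCA mulrA [_ * Y i 0]mulrC.
Qed.

Definition psd A := forall Y, 0 <= dot Y (A *m Y).

Lemma psd_cauchy_schwarz A Y Z : A^T = A -> psd A ->
  dot Y (A *m Z) ^+ 2 <= dot Y (A *m Y) * dot Z (A *m Z).
Proof.
move=> symA psdA; apply: discriminant_le => [|t]; first exact: psdA.
have := psdA (Y + t *: Z).
rewrite mulmxDr -scalemxAr !dotDl !dotDr !dotZl !dotZr (dot_sym Z Y symA).
by rewrite (dotC (A *m Z)); congr (0 <= _); ring.
Qed.

Lemma psd_form_eq0 A Y : A^T = A -> psd A -> dot Y (A *m Y) = 0 -> A *m Y = 0.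
Proof.
move=> symA psdA Y0; apply: dot_eq0.
have := psd_cauchy_schwarz Y (A *m Y) symA psdA.
rewrite Y0 mul0r (dot_sym Y (A *m Y) symA) => sq_le0.
by apply/eqP; rewrite -sqrf_eq0 eq_le sq_le0 sqr_ge0.
Qed.

Lemma psd_form_sq_le A s Y : A^T = A -> psd A ->
  (forall Z, dot Z (A *m Z) <= s * dot Z Z) ->
  dot (A *m Y) (A *m Y) <= s * dot Y (A *m Y).
Proof.
move=> symA psdA As.
have [/dot_eq0 ->|D_neq0] := eqVneq (dot (A *m Y) (A *m Y)) 0.
  by rewrite !dot0r mulr0.
have := psd_cauchy_schwarz Y (A *m Y) symA psdA; rewrite (dot_sym Y (A *m Y) symA).
have := As (A *m Y); have := psdA Y; have := dot_ge0 (A *m Y).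
set D := dot (A *m Y) (A *m Y) in D_neq0 *; set P := dot Y (A *m Y).
set T := dot (A *m Y) (A *m (A *m Y)) => D_ge0 P_ge0 TD DPT.
have D_gt0 : 0 < D by rewrite lt_def D_neq0.
have : D ^+ 2 <= P * (s * D) := le_trans DPT (ler_wpM2l P_ge0 TD).
nra.
Qed.

End Dot.

Section Singular.
Variables (R : realFieldType) (n : nat).
Implicit Types (Y : 'cV[R]_n) (C : 'M[R]_n).

Lemma dot_cauchy_schwarz Y Z : dot Y Z ^+ 2 <= dot Y Y * dot Z Z.
Proof.
have psd1 : psd (1%:M : 'M[R]_n) by move=> W; rewrite mul1mx dot_ge0.
by have := psd_cauchy_schwarz Y Z (trmx1 R n) psd1; rewrite !mul1mx.
Qed.

Lemma unit_coord_le1 Y i : dot Y Y = 1 -> `|Y i 0| <= 1.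
Proof.
move=> Y1; rewrite -(expr_le1 (n := 2)) // real_normK ?num_real //.
rewrite -Y1 /dot (bigD1 i) //= expr2 lerDl sumr_ge0 // => j _.
by rewrite -expr2 sqr_ge0.
Qed.

Lemma dot_mul_le C Y :
  dot (C *m Y) (C *m Y) <= (\sum_i \sum_j C i j ^+ 2) * dot Y Y.
Proof.
rewrite {1}/dot mulr_suml; apply: ler_sum => i _.
have -> : (C *m Y) i 0 = dot (row i C)^T Y by rewrite mxE; apply: eq_bigr => j _; rewrite !mxE.
have -> : \sum_j C i j ^+ 2 = dot (row i C)^T (row i C)^T.
  by apply: eq_bigr => j _; rewrite !mxE expr2.
by rewrite -expr2 dot_cauchy_schwarz.
Qed.

Lemma det_eq0_of_approx_kernel C :
  (forall eps, 0 < eps -> exists2 Y, dot Y Y = 1 & dot (C *m Y) (C *m Y) < eps) ->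
  \det C = 0.
Proof.
(* Since adj C * C = det C, |det C| is at most a constant times |C Y| for unit Y. *)
move=> approx; apply/eqP/negPn/negP => d_neq0.
set d := \det C in d_neq0; set K := \sum_i \sum_j \adj C i j ^+ 2.
have K_ge0 : 0 <= K by do 2![apply: sumr_ge0 => ? _]; exact: sqr_ge0.
have d2_gt0 : 0 < d ^+ 2 by rewrite lt_def sqr_ge0 sqrf_eq0 d_neq0.
have [Y Y1 CY_small] := approx (d ^+ 2 / (K + 1)) (divr_gt0 d2_gt0 (ltr_wpDl K_ge0 ltr01)).
have : d ^+ 2 <= K * dot (C *m Y) (C *m Y).
  have := dot_mul_le (\adj C) (C *m Y).
  by rewrite mulmxA mul_adj_mx mul_scalar_mx dotZl dotZr Y1 mulr1 -expr2.
have : d ^+ 2 / (K + 1) * (K + 1) = d ^+ 2 by rewrite mulfVK // gt_eqF // ltr_wpDl.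
have := dot_ge0 (C *m Y); move: CY_small.
move: (d ^+ 2 / (K + 1)) (dot (C *m Y) (C *m Y)) => eps D *; nra.
Qed.

End Singular.

Section RayleighQuotient.
Variables (R : realType) (n : nat) (A : 'M[R]_n).
Hypotheses (symA : A^T = A) (psdA : psd A) (n_gt0 : (0 < n)%N).
Implicit Types Y : 'cV[R]_n.

Definition rayleigh_sup : R :=
  sup (fun r => exists2 Y : 'cV[R]_n, dot Y Y = 1 & r = dot Y (A *m Y)).

Local Notation s := rayleigh_sup.

Let e0 : 'cV[R]_n := delta_mx (Ordinal n_gt0) 0.

Let dot_e0 : dot e0 e0 = 1.
Proof.
rewrite /dot (bigD1 (Ordinal n_gt0)) //= big1 => [|j j_neq]; rewrite !mxE ?eqxx.
  by rewrite mulr1 addr0.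
by rewrite (negbTE j_neq) mul0r.
Qed.

Lemma rayleigh_has_sup :
  classical_sets.has_sup (fun r => exists2 Y : 'cV[R]_n, dot Y Y = 1 & r = dot Y (A *m Y)).
Proof.
split; first by exists (dot e0 (A *m e0)), e0.
exists (\sum_i \sum_j `|A i j|) => _ [Y Y1 ->].
apply: ler_sum => i _; rewrite mxE mulr_sumr; apply: ler_sum => j _.
rewrite (le_trans (ler_norm _)) // !normrM mulrC -mulrA ler_piMr ?normr_ge0 //.
by rewrite -[1]mulr1 ler_pM ?normr_ge0 ?unit_coord_le1.
Qed.

Lemma rayleigh_sup_ub Y : dot Y Y = 1 -> dot Y (A *m Y) <= s.
Proof. by move=> Y1; apply: sup_upper_bound rayleigh_has_sup _ _; exists Y. Qed.

Lemma rayleigh_sup_ge0 : 0 <= s.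
Proof. exact: le_trans (psdA e0) (rayleigh_sup_ub dot_e0). Qed.

Lemma rayleigh_le Y : dot Y (A *m Y) <= s * dot Y Y.
Proof.
have [/dot_eq0 ->|Y_neq0] := eqVneq (dot Y Y) 0; first by rewrite mulmx0 !dot0r mulr0.
have YY_gt0 : 0 < dot Y Y by rewrite lt_def Y_neq0 dot_ge0.
set r := Num.sqrt (dot Y Y).
have r_gt0 : 0 < r by rewrite sqrtr_gt0.
have rr : r * r = dot Y Y by rewrite -expr2 sqr_sqrtr // ltW.
have := rayleigh_sup_ub (Y := r^-1 *: Y).
rewrite -scalemxAr !dotZl !dotZr -rr.
have -> : r^-1 * (r^-1 * (r * r)) = 1 by field; rewrite gt_eqF.
move=> /(_ erefl) unit_le.
have -> : dot Y (A *m Y) = r * r * (r^-1 * (r^-1 * dot Y (A *m Y))).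
  by field; rewrite gt_eqF.
by rewrite [s * _]mulrC ler_pM2l ?mulr_gt0.
Qed.

Let B := s%:M - A.

Let dot_B Y : dot Y (B *m Y) = s * dot Y Y - dot Y (A *m Y).
Proof. by rewrite mulmxBl mul_scalar_mx dotDr dotZr -scaleN1r dotZr mulN1r. Qed.

Let symB : B^T = B.
Proof. by rewrite /B linearB /= symA tr_scalar_mx. Qed.

Let psdB : psd B.
Proof. by move=> Y; rewrite dot_B subr_ge0 rayleigh_le. Qed.

Let B_le Y : dot Y (B *m Y) <= s * dot Y Y.
Proof. by rewrite dot_B lerBlDr lerDl psdA. Qed.

Lemma eigenvalue_rayleigh_sup : eigenvalue A s.
Proof.
have /eqP/det0P [w w_neq0 wB] : \det B = 0.
  (* |B Y|^2 <= s (s - Y^T A Y), which the supremum makes arbitrarily small. *)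
  apply: det_eq0_of_approx_kernel => eps eps_gt0.
  have s1_gt0 : 0 < s + 1 by rewrite ltr_wpDl // rayleigh_sup_ge0.
  have [_ [Y Y1 ->] close] := sup_adherent (divr_gt0 eps_gt0 s1_gt0) rayleigh_has_sup.
  exists Y => //; apply: le_lt_trans (psd_form_sq_le Y symB psdB B_le) _.
  rewrite dot_B Y1 mulr1.
  have : s - dot Y (A *m Y) < eps / (s + 1) by rewrite ltrBlDr -ltrBlDl.
  have : eps / (s + 1) * (s + 1) = eps by rewrite mulfVK // gt_eqF.
  have := rayleigh_sup_ge0; have := rayleigh_sup_ub Y1.
  move: (eps / (s + 1)) (dot Y (A *m Y)) => eps' a *; nra.
apply/eigenvalueP; exists w => //.
by move/eqP: wB; rewrite mulmxBr mul_mx_scalar subr_eq0 => /eqP.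
Qed.

Lemma eigenvalue_le_rayleigh_sup mu : eigenvalue A mu -> mu <= s.
Proof.
move=> /eigenvalueP [w wA w_neq0].
have Aw : A *m w^T = mu *: w^T by rewrite -{1}symA -trmx_mul wA linearZ.
have ww_gt0 : 0 < dot w^T w^T.
  by rewrite lt_def dot_ge0 andbT; apply: contra w_neq0 => /eqP/dot_eq0/eqP; rewrite trmx_eq0.
by have := rayleigh_le w^T; rewrite Aw dotZr ler_pM2r.
Qed.

Lemma rayleigh_eq_eigenvector Y : dot Y (A *m Y) = s * dot Y Y -> A *m Y = s *: Y.
Proof.
move=> eqY; have /eqP : B *m Y = 0 by apply: psd_form_eq0; rewrite ?dot_B ?eqY ?subrr.
by rewrite mulmxBl mul_scalar_mx subr_eq0 => /eqP ->.
Qed.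

End RayleighQuotient.

(** * Moving an edge *)

Section EdgeSets.
Variable T : finType.
Implicit Types (e : rel T) (E : {set T}).

Lemma set2_eq (a b c d : T) :
  ([set a; b] == [set c; d]) = ((a == c) && (b == d)) || ((a == d) && (b == c)).
Proof.
apply/eqP/idP => [ab_cd|/orP [] /andP [/eqP -> /eqP ->] //]; last exact: setUC.
have /set2P c_ab : c \in [set a; b] by rewrite ab_cd set21.
have /set2P d_ab : d \in [set a; b] by rewrite ab_cd set22.
have /set2P a_cd : a \in [set c; d] by rewrite -ab_cd set21.
have /set2P b_cd : b \in [set c; d] by rewrite -ab_cd set22.
by case: a_cd b_cd c_ab d_ab => -> [] -> [] ? [] ?; subst; rewrite !eqxx ?orbT.
Qed.

Lemma edgesP e E : reflect (exists x y, e x y /\ E = [set x; y]) (E \in edges e).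
Proof.
rewrite inE; apply: (iffP existsP) => [[x /existsP [y /andP [exy /eqP ->]]]|].
  by exists x, y.
by case=> x [y [exy ->]]; exists x; apply/existsP; exists y; rewrite exy eqxx.
Qed.

Lemma edges_set2 e x y : symmetric e -> ([set x; y] \in edges e) = e x y.
Proof.
move=> sym_e; apply/edgesP/idP => [[a [b [eab /eqP]]]|exy]; last by exists x, y.
by rewrite set2_eq => /orP [] /andP [/eqP -> /eqP ->] //; rewrite sym_e.
Qed.

(* The graph G - yt + ys. *)
Definition move_edge e (y t s : T) : rel T := fun x z =>
  ([set x; z] == [set y; s]) || (e x z && ([set x; z] != [set y; t])).

Lemma move_edge_simple e y t s : simple_graph e -> y != s ->
  simple_graph (move_edge e y t s).
Proof.
move=> [sym_e irr_e] y_neq_s; split=> [x z|x]; first by rewrite /move_edge sym_e setUC.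
rewrite /move_edge irr_e orbF set2_eq; apply/negP.
by case/orP => /andP [/eqP xy /eqP xs]; move: y_neq_s; rewrite -xy -xs eqxx.
Qed.

Lemma edges_move_edge e y t s :
  edges (move_edge e y t s) = [set y; s] |: (edges e :\ [set y; t]).
Proof.
apply/setP => E; rewrite in_setU1 in_setD1; apply/edgesP/idP.
  case=> a [b [/orP [/eqP <-|/andP [eab ab_neq]] ->]]; first by rewrite eqxx.
  by rewrite ab_neq; apply/orP; right; apply/edgesP; exists a, b.
case/orP => [/eqP ->|/andP [E_neq /edgesP [a [b [eab E_ab]]]]].
  by exists y, s; rewrite /move_edge eqxx.
by exists a, b; rewrite /move_edge eab -E_ab E_neq orbT.
Qed.

Lemma move_edge_new_edge e y t s : [set y; s] \in edges (move_edge e y t s).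
Proof. by rewrite edges_move_edge setU11. Qed.

Lemma move_edge_old_edge e y t s E : E \in edges e -> y \notin E ->
  E \in edges (move_edge e y t s).
Proof.
move=> Ee y_notin; rewrite edges_move_edge in_setU1 in_setD1 Ee andbT.
by apply/orP; right; apply: contraNneq y_notin => ->; rewrite set21.
Qed.

Lemma card_edges_move_edge e y t s : symmetric e -> e y t -> ~~ e y s ->
  #|edges (move_edge e y t s)| = #|edges e|.
Proof.
move=> sym_e eyt not_eys.
rewrite edges_move_edge cardsU1 in_setD1 edges_set2 // (negbTE not_eys) andbF.
by rewrite [RHS](cardsD1 [set y; t]) edges_set2 // eyt.
Qed.

Lemma move_edge_at e y t s j : t != y -> t != s ->
  move_edge e y t s t j = e t j && (j != y).
Proof.
move=> t_neq_y t_neq_s.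
by rewrite /move_edge !set2_eq eqxx (negbTE t_neq_y) (negbTE t_neq_s).
Qed.

End EdgeSets.

Lemma sum_set2 (T : finType) (V : nmodType) (f : T -> V) a b : a != b ->
  \sum_(w in [set a; b]) f w = f a + f b.
Proof. by move=> ab; rewrite big_setU1 ?big_set1 // inE. Qed.

Lemma sum_adjacent_pairs (T : finType) (V : nmodType) (e : rel T) (h : {set T} -> V) :
  simple_graph e ->
  \sum_x \sum_(y | e x y) h [set x; y] = (\sum_(E in edges e) h E) *+ 2.
Proof.
move=> [sym_e irr_e]; rewrite pair_big_dep /=.
rewrite (partition_big (fun p => [set p.1; p.2]) (mem (edges e))) /=; last first.
  by case=> x y /= exy; apply/edgesP; exists x, y.
rewrite -sumrMnl; apply: eq_bigr => E /edgesP [x [y [exy ->]]].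
rewrite (eq_bigr (fun=> h [set x; y])) => [|p /andP [_ /eqP ->] //].
rewrite sumr_const; congr (_ *+ _).
have x_neq_y : x != y by apply: contraTneq exy => ->; rewrite irr_e.
transitivity #|[set (x, y); (y, x)]|; last by rewrite cards2 xpair_eqE (negbTE x_neq_y).
apply: eq_card => -[a b]; rewrite unfold_in !inE /= set2_eq !xpair_eqE.
apply/andP/idP => [[] //|ab_xy]; split => //.
by case/orP: ab_xy => /andP [/eqP -> /eqP ->]; rewrite // sym_e.
Qed.

Section SignlessLaplacian.
Variables (R : realType) (n : nat).
Implicit Types (e : rel 'I_n) (Y : 'cV[R]_n).

Lemma sQ_mul e Y i : (sQ R e *m Y) i 0 = \sum_j (e i j)%:R * (Y i 0 + Y j 0).
Proof.
rewrite mxE; under eq_bigr => j _ do rewrite !mxE mulrDl.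
rewrite big_split /= (bigD1 i) //= eqxx mulr1n big1 ?addr0; last first.
  by move=> j; rewrite eq_sym => /negbTE ->; rewrite mulr0n mul0r.
rewrite /degree -sum1_card natr_sum big_mkcond /= mulr_suml -big_split /=.
by apply: eq_bigr => j _; rewrite inE mulrDr; case: (e i j); rewrite ?mul1r ?mul0r.
Qed.

Lemma sQ_sym e : symmetric e -> (sQ R e)^T = sQ R e.
Proof.
move=> sym_e; apply/matrixP => i j; rewrite !mxE (sym_e j i).
by have [->|/negbTE ji] := eqVneq j i; rewrite ?eqxx // eq_sym ji !mulr0n.
Qed.

Lemma dot_sQ e Y : simple_graph e -> dot Y (sQ R e *m Y) = mweight Y (edges e).
Proof.
move=> ge; have [sym_e irr_e] := ge.
apply: (@mulIf _ 2); first by rewrite pnatr_eq0.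
rewrite !mulr_natr -sum_adjacent_pairs // /dot.
under eq_bigr => i _ do rewrite sQ_mul mulr_sumr.
rewrite mulr2n [in X in X + _]exchange_big -big_split /=; apply: eq_big => // i _.
rewrite -big_split [RHS]big_mkcond /=; apply: eq_bigr => j _.
rewrite (sym_e j i); case: ifP => [eij|]; last by rewrite !(mul0r, mulr0, addr0).
have ij : i != j by apply: contraTneq eij => ->; rewrite irr_e.
by rewrite sum_set2 // !mul1r; ring.
Qed.

Lemma sQ_psd e : simple_graph e -> psd (sQ R e).
Proof. by move=> ge Y; rewrite dot_sQ // sumr_ge0 // => E _; rewrite sqr_ge0. Qed.

Lemma sQ_rayleigh e : simple_graph e -> (0 < n)%N ->
  exists q, [/\ is_q e q, forall Y, dot Y (sQ R e *m Y) <= q * dot Y Y &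
    forall Y, dot Y (sQ R e *m Y) = q * dot Y Y -> sQ R e *m Y = q *: Y].
Proof.
move=> ge n_gt0; have [sym_e _] := ge.
have symQ := sQ_sym sym_e; have psdQ := sQ_psd ge.
exists (rayleigh_sup (sQ R e)); split; last 2 first.
- exact: rayleigh_le.
- exact: rayleigh_eq_eigenvector.
split; first exact: eigenvalue_rayleigh_sup.
exact: eigenvalue_le_rayleigh_sup.
Qed.

Lemma mweight_move_edge e y t s Y : simple_graph e -> e y t -> ~~ e y s -> y != s ->
  mweight Y (edges (move_edge e y t s)) =
  mweight Y (edges e) - (Y y 0 + Y t 0) ^+ 2 + (Y y 0 + Y s 0) ^+ 2.
Proof.
move=> [sym_e irr_e] eyt not_eys y_neq_s.
have y_neq_t : y != t by apply: contraTneq eyt => ->; rewrite irr_e.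
rewrite /mweight edges_move_edge big_setU1 /=; last first.
  by rewrite in_setD1 edges_set2 // (negbTE not_eys) andbF.
rewrite [X in _ = X - _ + _](big_setD1 [set y; t]) ?edges_set2 // !sum_set2 //.
by rewrite /=; ring.
Qed.

Lemma sQ_move_edge_at e y t s Y : simple_graph e -> e y t -> ~~ e y s ->
  (sQ R (move_edge e y t s) *m Y) t 0 = (sQ R e *m Y) t 0 - (Y t 0 + Y y 0).
Proof.
move=> [sym_e irr_e] eyt not_eys.
have t_neq_y : t != y by apply: contraTneq eyt => ->; rewrite irr_e.
have t_neq_s : t != s by apply: contraNneq not_eys => <-.
rewrite !sQ_mul [in RHS](bigD1 y) //= (bigD1 y) //= move_edge_at // eqxx andbF.
rewrite -sym_e eyt mul0r add0r mul1r [X in _ = X - _]addrC addrK; apply: eq_bigr => j j_neq_y.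
by rewrite move_edge_at // j_neq_y andbT.
Qed.

End SignlessLaplacian.

(** * Matchings given by pairings *)

(* A matching u_1 v_1, ..., u_k v_k is encoded by the injective F : 'I_k * bool -> 'I_n
   with F (l, false) = u_l and F (l, true) = v_l. *)
Section Pairings.
Variables (n k : nat) (F : 'I_k * bool -> 'I_n).

Definition pair_at l : {set 'I_n} := [set F (l, false); F (l, true)].

Definition pairset : {set {set 'I_n}} := [set pair_at l | l : 'I_k].

Hypothesis F_inj : injective F.

Lemma notin_pair_at l p : l != p.1 -> F p \notin pair_at l.
Proof.
by move=> l_neq; rewrite !inE; apply/norP; split; apply: contra l_neq => /eqP /F_inj ->.
Qed.

Lemma pair_at_inj : injective pair_at.
Proof.
move=> l l' eq_pair; apply/eqP; apply: contraT => l_neq.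
by have := notin_pair_at (p := (l', false)) l_neq; rewrite eq_pair set21.
Qed.

Lemma card_pairset : #|pairset| = k.
Proof. by rewrite card_imset ?card_ord //; exact: pair_at_inj. Qed.

Lemma cross_notin_pairset p p' : p.1 != p'.1 -> [set F p; F p'] \notin pairset.
Proof.
move=> p_neq; apply/imsetP => -[l _ eq_pair].
have at_l q : F q \in [set F p; F p'] -> l = q.1.
  by move=> Fq; apply/eqP; apply: contraLR Fq => /notin_pair_at; rewrite eq_pair.
by move: p_neq; rewrite -(at_l p (set21 _ _)) -(at_l p' (set22 _ _)) eqxx.
Qed.

Lemma matching_pairset e : pairset \subset edges e -> matching e pairset.
Proof.
move=> sub_e; rewrite /matching sub_e; apply/trivIsetP => A B /imsetP [l _ ->].
move=> /imsetP [l' _ ->] pair_neq.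
have l_neq : l != l' by apply: contraNneq pair_neq => ->.
have l'_neq : l' != l by rewrite eq_sym.
rewrite -setI_eq0; apply/eqP/setP => x; rewrite inE [RHS]inE; apply/andP => -[].
by move=> /set2P [] ->; apply/negP;
  [exact: (notin_pair_at (p := (l, false))) | exact: (notin_pair_at (p := (l, true)))].
Qed.

Lemma matching_number_ge_pairset e : pairset \subset edges e -> (k <= matching_number e)%N.
Proof.
by move=> sub_e; rewrite -card_pairset; apply: leq_bigmax_cond; apply: matching_pairset.
Qed.

End Pairings.

Definition pairfun (n k : nat) (u v : 'I_k -> 'I_n) (p : 'I_k * bool) : 'I_n :=
  if p.2 then v p.1 else u p.1.

Lemma pairing_inj_of_matching (n k : nat) (e : rel 'I_n) (F : 'I_k * bool -> 'I_n) :
  irreflexive e -> matching e (pairset F) -> #|pairset F| = k -> injective F.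
Proof.
move=> irr_e /andP [sub_e triv] card_k.
have /imset_injP pair_inj : #|pairset F| == #|'I_k| by rewrite card_k card_ord.
have in_pairset l : pair_at F l \in pairset F by apply: imset_f.
have F_neq l : F (l, false) != F (l, true).
  apply/eqP => F_eq; have /edgesP [x [y [exy xy_eq]]] := subsetP sub_e _ (in_pairset l).
  have x_in : x \in pair_at F l by rewrite xy_eq set21.
  have y_in : y \in pair_at F l by rewrite xy_eq set22.
  rewrite /pair_at F_eq setUid in x_in y_in.
  by move: exy; rewrite (set1P x_in) (set1P y_in) irr_e.
move=> [l c] [l' c']; have [<-|l_neq] := eqVneq l l' => F_eq.
  by case: c c' F_eq => -[] // F_eq; move: (F_neq l); rewrite F_eq eqxx.
have pair_neq : pair_at F l != pair_at F l'.
  by apply: contra l_neq => /eqP /pair_inj ->.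
have /disjoint_setI0 := trivIsetP triv _ _ (in_pairset l) (in_pairset l') pair_neq.
move/setP/(_ (F (l, c))); rewrite inE [in F (l, c) \in pair_at F l']F_eq.
have mem_pair q : F q \in pair_at F q.1 by case: q => ? []; rewrite !inE eqxx ?orbT.
by rewrite (mem_pair (l, c)) (mem_pair (l', c')) inE.
Qed.

Section CrossPairing.
Variables (n k : nat) (F : 'I_k * bool -> 'I_n) (i j : 'I_k) (b : bool).
Hypotheses (F_inj : injective F) (i_neq_j : i != j).

Definition cross_pairing := F \o tperm (i, true) (j, b).

Lemma cross_pairing_inj : injective cross_pairing.
Proof. by move=> p p' /F_inj /perm_inj. Qed.

Let ij_neq (c c' : bool) : (i, c) != (j, c').
Proof. by rewrite xpair_eqE (negbTE i_neq_j). Qed.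

Lemma pair_at_cross_i : pair_at cross_pairing i = [set F (i, false); F (j, b)].
Proof.
rewrite /pair_at /cross_pairing /= tpermL tpermD //; first by rewrite xpair_eqE eqxx.
by rewrite eq_sym ij_neq.
Qed.

Lemma pair_at_cross_j : pair_at cross_pairing j = [set F (j, ~~ b); F (i, true)].
Proof.
rewrite /pair_at /cross_pairing /=; case: b; rewrite tpermR tpermD ?ij_neq //=.
- by rewrite xpair_eqE eqxx.
- by rewrite setUC.
- by rewrite xpair_eqE eqxx.
Qed.

Lemma pair_at_cross_other l : l != i -> l != j -> pair_at cross_pairing l = pair_at F l.
Proof.
move=> l_neq_i l_neq_j.
by rewrite /pair_at /cross_pairing /= !tpermD // xpair_eqE eq_sym
  ?(negbTE l_neq_i) ?(negbTE l_neq_j).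
Qed.

Lemma pairset_cross_sub (E : {set {set 'I_n}}) :
  [set F (i, false); F (j, b)] \in E -> [set F (j, ~~ b); F (i, true)] \in E ->
  (forall l, l != i -> l != j -> pair_at F l \in E) -> pairset cross_pairing \subset E.
Proof.
move=> Ei Ej Eother; apply/subsetP => _ /imsetP [l _ ->].
have [->|l_neq_i] := eqVneq l i; first by rewrite pair_at_cross_i.
have [->|l_neq_j] := eqVneq l j; first by rewrite pair_at_cross_j.
by rewrite pair_at_cross_other // Eother.
Qed.

Lemma mweight_cross_pairing (R : realType) (X : 'cV[R]_n) :
  let w E := (\sum_(x in E) X x 0) ^+ 2 in
  mweight X (pairset cross_pairing) - mweight X (pairset F) =
  w [set F (i, false); F (j, b)] + w [set F (j, ~~ b); F (i, true)]
  - w (pair_at F i) - w (pair_at F j).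
Proof.
move=> w; rewrite /mweight (big_imset _ (in2W (pair_at_inj cross_pairing_inj))).
rewrite (big_imset _ (in2W (pair_at_inj F_inj))) -sumrB /=.
rewrite (bigD1 i) //= (bigD1 j) 1?eq_sym //= [X in _ + (_ + X)]big1 ?addr0.
  by rewrite pair_at_cross_i pair_at_cross_j /w; ring.
by move=> l /andP [l_neq_i l_neq_j]; rewrite pair_at_cross_other // subrr.
Qed.

End CrossPairing.

(** * Two disjoint edges and the four edges between them *)

Section FourVertices.
Variables (T : finType) (e : rel T) (a b c d : T).
Hypotheses (sym_e : symmetric e) (irr_e : irreflexive e) (eab : e a b) (ecd : e c d).
Hypotheses (a_neq_b : a != b) (a_neq_c : a != c) (a_neq_d : a != d).
Hypotheses (b_neq_c : b != c) (b_neq_d : b != d) (c_neq_d : c != d).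

Local Notation S := [set a; b; c; d].

Let memS x : x \in S -> [\/ x = a, x = b, x = c | x = d].
Proof. by rewrite !inE -!orbA => /or4P [] /eqP ->; constructor. Qed.

Let cardS : #|S| = 4%N.
Proof.
rewrite -!setUA !cardsU1 cards1 !inE.
by rewrite (negbTE a_neq_b) (negbTE a_neq_c) (negbTE a_neq_d) (negbTE b_neq_c)
  (negbTE b_neq_d) (negbTE c_neq_d).
Qed.

Let set2_subS x y : x \in S -> y \in S -> [set x; y] \subset S.
Proof. by move=> xS yS; apply/subsetP => z /set2P [] ->. Qed.

Let abS : [set a; b] \subset S.
Proof. by apply: set2_subS; rewrite !inE eqxx ?orbT. Qed.

Let cdS : [set c; d] \subset S.
Proof. by apply: set2_subS; rewrite !inE eqxx ?orbT. Qed.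

Let ab_neq_cd : [set a; b] != [set c; d].
Proof. by rewrite set2_eq (negbTE a_neq_c) (negbTE a_neq_d). Qed.

Let in_induced E : (E \in induced_edges e S) = (E \in edges e) && (E \subset S).
Proof. by rewrite inE. Qed.

Let pairsS := [set E : {set T} | E \subset S & #|E| == 2%N].

Let induced_sub_pairs : induced_edges e S \subset pairsS.
Proof.
apply/subsetP => E; rewrite in_induced => /andP [/edgesP [x [y [exy ->]]] xyS].
have x_neq_y : x != y by apply: contraTneq exy => ->; rewrite irr_e.
by rewrite inE xyS cards2 x_neq_y.
Qed.

Lemma is_2K2_of_no_cross :
  ~~ e a c -> ~~ e a d -> ~~ e b c -> ~~ e b d -> is_2K2 e S.
Proof.
move=> /negbTE nac /negbTE nad /negbTE nbc /negbTE nbd.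
have induced : induced_edges e S = [set [set a; b]; [set c; d]].
  apply/setP => E; rewrite in_induced in_set2; apply/andP/idP => [[]|].
    move=> /edgesP [x [y [exy ->]]] xyS.
    have /memS xS : x \in S by apply: (subsetP xyS); rewrite set21.
    have /memS yS : y \in S by apply: (subsetP xyS); rewrite set22.
    move: exy; case: xS => ->; case: yS => ->;
      rewrite ?irr_e ?nac ?nad ?nbc ?nbd -1?sym_e ?nac ?nad ?nbc ?nbd // => _;
      by rewrite ?eqxx ?(setUC [set b]) ?(setUC [set d]) ?eqxx ?orbT.
  by case/orP => /eqP ->; rewrite edges_set2 ?eab ?ecd.
rewrite /is_2K2 cardS induced cards2 ab_neq_cd /=.
apply: trivIsetU; rewrite ?trivIset1 // /cover !big_set1 -setI_eq0.
apply/eqP/setP => z; rewrite in_setI in_set0.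
by apply/negP => /andP [/set2P [] -> /set2P [] /eqP];
  rewrite ?(negbTE a_neq_c) ?(negbTE a_neq_d) ?(negbTE b_neq_c) ?(negbTE b_neq_d).
Qed.

Lemma is_K4_of_all_cross : e a c -> e a d -> e b c -> e b d -> is_K4 e S.
Proof.
move=> eac ead ebc ebd; have card_pairs : #|pairsS| = 6%N by rewrite cards_draws cardS.
rewrite /is_K4 cardS; suff -> : induced_edges e S = pairsS by rewrite card_pairs.
apply/eqP; rewrite eqEcard induced_sub_pairs card_pairs /=.
rewrite -card_pairs subset_leq_card //; apply/subsetP => E.
rewrite inE => /andP [ES /cards2P [x [y [x_neq_y E_xy]]]].
rewrite in_induced ES andbT E_xy edges_set2 //.
have /memS xS : x \in S by apply: (subsetP ES); rewrite E_xy set21.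
have /memS yS : y \in S by apply: (subsetP ES); rewrite E_xy set22.
by move: x_neq_y; case: xS => ->; case: yS => ->; rewrite ?eqxx // -1?sym_e.
Qed.

Lemma is_2K2_no_cross x z : x \in [set a; b] -> z \in [set c; d] -> is_2K2 e S -> ~~ e x z.
Proof.
move=> xab zcd /and3P [_ /eqP card2 _]; apply/negP => exz.
have x_notin_cd : x \notin [set c; d].
  by case/set2P: xab => ->; rewrite !inE negb_or ?a_neq_c ?a_neq_d ?b_neq_c ?b_neq_d.
have z_notin_ab : z \notin [set a; b].
  by case/set2P: zcd => ->; rewrite !inE negb_or ?(eq_sym c a) ?(eq_sym c b)
    ?(eq_sym d a) ?(eq_sym d b) ?a_neq_c ?a_neq_d ?b_neq_c ?b_neq_d.
have xz_neq_ab : [set x; z] != [set a; b] by apply: contraNneq z_notin_ab => <-; rewrite set22.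
have xz_neq_cd : [set x; z] != [set c; d] by apply: contraNneq x_notin_cd => <-; rewrite set21.
have xz_ab_cd : [set [set x; z]; [set a; b]; [set c; d]] \subset induced_edges e S.
  apply/subsetP => E; rewrite -setUA => /setU1P [->|/set2P [] ->]; rewrite in_induced.
  - by rewrite edges_set2 // exz set2_subS ?(subsetP abS _ xab) ?(subsetP cdS _ zcd).
  - by rewrite edges_set2 // eab abS.
  - by rewrite edges_set2 // ecd cdS.
have := subset_leq_card xz_ab_cd; rewrite card2 -setUA cardsU1 cards2 ab_neq_cd.
by rewrite !inE (negbTE xz_neq_ab) (negbTE xz_neq_cd).
Qed.

Lemma is_K4_adj x y : is_K4 e S -> x \in S -> y \in S -> x != y -> e x y.
Proof.
move=> /andP [_ /eqP card6] xS yS x_neq_y.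
have : induced_edges e S == pairsS.
  by rewrite eqEcard induced_sub_pairs card6 cards_draws cardS.
move/eqP => induced; have : [set x; y] \in pairsS by rewrite inE set2_subS // cards2 x_neq_y.
by rewrite -induced in_induced edges_set2 // => /andP [].
Qed.

End FourVertices.

(** * The extremal graph *)

Lemma sq_sum_swap_lt (R : realFieldType) (a b c d : R) : a < d -> c < b ->
  (a + b) ^+ 2 + (c + d) ^+ 2 < (a + c) ^+ 2 + (b + d) ^+ 2.
Proof. by move=> ad cb; rewrite -subr_gt0; nra. Qed.

Lemma proper_ordering_le (R : realType) (n k : nat) (X : 'cV[R]_n) Ms (u v : 'I_k -> 'I_n) :
  proper_ordering X Ms u v -> forall i j : 'I_k, (i <= j)%N ->
  X (v j) 0 <= X (v i) 0 /\ (X (v i) 0 = X (v j) 0 -> X (u j) 0 <= X (u i) 0).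
Proof.
case=> _ _ step.
suff by_dist d (i j : 'I_k) : val j = (val i + d)%N ->
    X (v j) 0 <= X (v i) 0 /\ (X (v i) 0 = X (v j) 0 -> X (u j) 0 <= X (u i) 0).
  by move=> i j ij; apply: (by_dist (j - i)%N); rewrite subnKC.
elim: d j => [|d IHd] j def_j; first by rewrite (val_inj (etrans def_j (addn0 _))).
have d_lt : (i + d < k)%N by rewrite (leq_trans _ (ltn_ord j)) // def_j addnS.
have [vj'_le uj'_le] := IHd (Ordinal d_lt) erefl.
have [vj_le uj_le] := step (Ordinal d_lt) j (etrans def_j (addnS _ _)).
split=> [|vij]; first exact: le_trans vj_le vj'_le.
have vj' : X (v (Ordinal d_lt)) 0 = X (v j) 0.
  by apply/eqP; rewrite eq_le vj_le -vij vj'_le.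
by apply: le_trans (uj_le vj') (uj'_le _); rewrite vij vj'.
Qed.

Section ExtremalGraph.
Variables (R : realType) (m beta n : nat) (e : rel 'I_n) (qs : R) (X : 'cV[R]_n).
Hypotheses (ge : simple_graph e) (card_e : #|edges e| = m).
Hypothesis qs_max : forall (n' : nat) (e' : rel 'I_n') (q' : R),
  simple_graph e' -> #|edges e'| = m -> (beta <= matching_number e')%N -> is_q e' q' -> q' <= qs.
Hypothesis X_principal : principal_eigvec e qs X.

Local Notation x w := (X w 0).

Lemma principal_ge0 w : 0 <= x w.
Proof. by case: X_principal. Qed.

Lemma principal_dot : dot X X = 1.
Proof. by case: X_principal => _ <- _; apply: eq_bigr => w _; rewrite expr2. Qed.

Lemma principal_sQ w : (sQ R e *m X) w 0 = qs * x w.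
Proof. by case: X_principal => _ _ ->; rewrite mxE. Qed.

Lemma principal_mweight : mweight X (edges e) = qs.
Proof. by case: X_principal => _ _ QX; rewrite -dot_sQ // QX dotZr principal_dot mulr1. Qed.

Lemma principal_nb_eq0 w z : e w z -> x w = 0 -> x z = 0.
Proof.
move=> ewz xw0; have := principal_sQ w; rewrite sQ_mul xw0 mulr0 => /eqP.
rewrite psumr_eq0 => [/allP /(_ z (mem_index_enum z))|y _]; last first.
  by rewrite mulr_ge0 ?ler0n // add0r principal_ge0.
by rewrite ewz mul1r add0r => /eqP.
Qed.

Lemma principal_gt0 : exists w, 0 < x w.
Proof.
have [w w_gt0|x_le0] := pickP (fun w => 0 < x w); first by exists w.
have : dot X X = 0.
  rewrite /dot big1 // => w _; suff -> : x w = 0 by rewrite mulr0.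
  by apply/eqP; rewrite eq_le principal_ge0 andbT leNgt x_le0.
by rewrite principal_dot => /eqP; rewrite oner_eq0.
Qed.

Lemma mweight_le_qs e' : simple_graph e' -> #|edges e'| = m ->
  (beta <= matching_number e')%N -> mweight X (edges e') <= qs.
Proof.
move=> ge' card_e' beta_le; have [w _] := principal_gt0.
have [q' [is_q' rayleigh _]] := sQ_rayleigh R ge' (leq_ltn_trans (leq0n w) (ltn_ord w)).
rewrite -dot_sQ //; apply: le_trans (rayleigh X) _.
by rewrite principal_dot mulr1 (qs_max ge').
Qed.

Lemma move_edge_eq0 y t s : e y t -> ~~ e y s -> y != s -> x t <= x s ->
  (beta <= matching_number (move_edge e y t s))%N -> [/\ x y = 0, x t = 0 & x s = 0].
Proof.
move=> eyt not_eys y_neq_s xts beta_le; have [sym_e irr_e] := ge.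
have ge' := move_edge_simple t ge y_neq_s.
have card_e' : #|edges (move_edge e y t s)| = m by rewrite card_edges_move_edge.
have [w _] := principal_gt0.
have [q' [is_q' rayleigh eigvec]] := sQ_rayleigh R ge' (leq_ltn_trans (leq0n w) (ltn_ord w)).
have q'_le := qs_max ge' card_e' beta_le is_q'.
have sq_le : (x y + x t) ^+ 2 <= (x y + x s) ^+ 2.
  by rewrite ler_sqr ?nnegrE ?addr_ge0 ?principal_ge0 // lerD2l.
have mweight' := mweight_move_edge X ge eyt not_eys y_neq_s.
have := rayleigh X; rewrite dot_sQ // mweight' principal_mweight principal_dot mulr1.
move=> q'_ge; have [q'_eq sq_eq] : q' = qs /\ (x y + x t) ^+ 2 = (x y + x s) ^+ 2.
  by split; lra.
have QX : sQ R (move_edge e y t s) *m X = qs *: X.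
  by rewrite -q'_eq; apply: eigvec; rewrite dot_sQ // mweight' principal_mweight principal_dot; lra.
have := sQ_move_edge_at X ge eyt not_eys; rewrite QX mxE principal_sQ => row_t.
have [xt0 xy0] : x t = 0 /\ x y = 0.
  by have := principal_ge0 t; have := principal_ge0 y; split; lra.
split=> //; move: sq_eq; rewrite xt0 xy0 !add0r expr0n /= => /esym /eqP.
by rewrite sqrf_eq0 => /eqP.
Qed.

Section Ordering.
Variables (k : nat) (Ms : {set {set 'I_n}}) (u v : 'I_k -> 'I_n).
Hypotheses (beta_le_k : (beta <= k)%N) (Ms_extremal : extremal_matching e X Ms).
Hypotheses (k_eq : k = matching_number e) (ordering : proper_ordering X Ms u v).

Local Notation F := (pairfun u v).

Lemma Ms_pairset : Ms = pairset F.
Proof. by case: ordering. Qed.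

Lemma pairset_sub_edges : pairset F \subset edges e.
Proof. by case: Ms_extremal => /andP [/andP [sub_e _] _] _; rewrite -Ms_pairset. Qed.

Lemma pairfun_inj : injective F.
Proof.
have [/andP [matching_Ms /eqP card_Ms] _] := Ms_extremal; have [_ irr_e] := ge.
by apply: (pairing_inj_of_matching irr_e); rewrite -Ms_pairset // card_Ms k_eq.
Qed.

Lemma pairfun_edge l : e (u l) (v l).
Proof.
have [sym_e _] := ge; rewrite -edges_set2 //.
by apply: (subsetP pairset_sub_edges); apply: imset_f.
Qed.

Lemma pair_at_edges l : pair_at F l \in edges e.
Proof. exact: (subsetP pairset_sub_edges) (imset_f _ _). Qed.

Lemma beta_le_pairing e' (G : 'I_k * bool -> 'I_n) :
  injective G -> pairset G \subset edges e' -> (beta <= matching_number e')%N.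
Proof. by move=> G_inj /(matching_number_ge_pairset G_inj); apply: leq_trans. Qed.

Lemma cross_edge_move p p' s : p.1 != p'.1 -> e (F p) (F p') -> ~~ e (F p) s -> F p != s ->
  x (F p') <= x s -> [/\ x (F p) = 0, x (F p') = 0 & x s = 0].
Proof.
move=> p_neq epp' not_e neq_s le_s; apply: move_edge_eq0 => //.
apply: (beta_le_pairing pairfun_inj); apply/subsetP => E E_in.
rewrite edges_move_edge in_setU1 in_setD1 (subsetP pairset_sub_edges) // andbT.
apply/orP; right; apply: contraTneq E_in => ->.
exact (cross_notin_pairset pairfun_inj p_neq).
Qed.

Lemma no_cross_edge_at_zero p p' : p.1 != p'.1 -> x (F p) = 0 -> ~~ e (F p) (F p').
Proof.
(* Move the edge onto a vertex s with x_s > 0. *)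
move=> p_neq xp0; apply/negP => epp'; have [s s_gt0] := principal_gt0.
have not_e : ~~ e (F p) s by apply: contraTN s_gt0 => /principal_nb_eq0 ->; rewrite ?ltxx.
have neq_s : F p != s by apply: contraTneq s_gt0 => <-; rewrite xp0 ltxx.
have le_s : x (F p') <= x s by rewrite (principal_nb_eq0 epp' xp0) ltW.
have [_ _ xs0] := cross_edge_move p_neq epp' not_e neq_s le_s.
by rewrite xs0 ltxx in s_gt0.
Qed.

Section TwoMatchingEdges.
Variables (i j : 'I_k).
Hypothesis i_lt_j : (i < j)%N.

Local Notation S := [set u i; v i; u j; v j].

Let i_neq_j : i != j. Proof. by rewrite neq_ltn i_lt_j. Qed.
Let sym_e : symmetric e. Proof. by case: ge. Qed.
Let irr_e : irreflexive e. Proof. by case: ge. Qed.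

Let F_neq p q : p != q -> F p != F q.
Proof. by rewrite (inj_eq pairfun_inj). Qed.

Let neq_ij (c b : bool) : (i, c) != (j, b). Proof. by rewrite xpair_eqE (negbTE i_neq_j). Qed.
Let neq_ji (c b : bool) : (j, c) != (i, b). Proof. by rewrite eq_sym neq_ij. Qed.
Let neq_l (l : 'I_k) (c : bool) : (l, c) != (l, ~~ c).
Proof. by rewrite xpair_eqE eqxx; case: c. Qed.

Let ui_vi : u i != v i. Proof. exact: (F_neq (neq_l i false)). Qed.
Let uj_vj : u j != v j. Proof. exact: (F_neq (neq_l j false)). Qed.
Let ui_uj : u i != u j. Proof. exact: (F_neq (neq_ij false false)). Qed.
Let ui_vj : u i != v j. Proof. exact: (F_neq (neq_ij false true)). Qed.
Let vi_uj : v i != u j. Proof. exact: (F_neq (neq_ij true false)). Qed.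
Let vi_vj : v i != v j. Proof. exact: (F_neq (neq_ij true true)). Qed.

Let x_ui_vi : x (u i) <= x (v i). Proof. by case: ordering => _ + _; apply. Qed.
Let x_uj_vj : x (u j) <= x (v j). Proof. by case: ordering => _ + _; apply. Qed.

Lemma no_cross_edges_at_zero : x (v j) = 0 ->
  [&& ~~ e (u i) (u j), ~~ e (u i) (v j), ~~ e (v i) (u j) & ~~ e (v i) (v j)].
Proof.
move=> xvj0; have xuj0 : x (u j) = 0.
  by apply/eqP; rewrite eq_le principal_ge0 andbT -xvj0 x_uj_vj.
have none c b : ~~ e (F (i, c)) (F (j, b)).
  rewrite sym_e; apply: no_cross_edge_at_zero; first by rewrite /= eq_sym.
  by case: b.
by apply/and4P; split; [exact: (none false false) | exact: (none false true)
  | exact: (none true false) | exact: (none true true)].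
Qed.

Lemma cross_edge_up b : 0 < x (v j) -> x (v j) <= x (u i) ->
  e (u i) (F (j, b)) -> e (v i) (F (j, b)).
Proof.
move=> vj_gt0 vj_le_ui e_ui; apply: contraTT vj_gt0 => not_e_vi.
have ji_neq : (j, b).1 != (i, false).1 by rewrite /= eq_sym.
rewrite sym_e in e_ui; rewrite sym_e in not_e_vi.
have [_ xui0 _] := cross_edge_move ji_neq e_ui not_e_vi (F_neq (neq_ji b true)) x_ui_vi.
by rewrite -leNgt -xui0.
Qed.

Lemma cross_swap_true : 0 < x (v j) -> x (v j) <= x (u i) ->
  e (v i) (u j) -> e (u i) (v j).
Proof.
move=> vj_gt0 vj_le_ui e_viuj; apply: contraTT vj_gt0 => not_e_uivj.
have beta_le : (beta <= matching_number (move_edge e (v j) (u j) (u i)))%N.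
  apply: (beta_le_pairing (cross_pairing_inj (i := i) (j := j) (b := true) pairfun_inj)).
  apply: pairset_cross_sub => //=.
  - by rewrite setUC move_edge_new_edge.
  - rewrite move_edge_old_edge ?edges_set2 1?sym_e //.
    by rewrite !inE negb_or ![v j == _]eq_sym uj_vj vi_vj.
  - move=> l _ l_neq_j.
    apply: move_edge_old_edge (pair_at_edges l) _.
    exact: (notin_pair_at pairfun_inj (p := (j, true)) l_neq_j).
rewrite sym_e in not_e_uivj; have e_vjuj : e (v j) (u j) by rewrite sym_e pairfun_edge.
have [xvj0 _ _] := move_edge_eq0 e_vjuj not_e_uivj (F_neq (neq_ji true false))
  (le_trans x_uj_vj vj_le_ui) beta_le.
by rewrite xvj0 ltxx.
Qed.

Lemma cross_swap_false : 0 < x (v j) -> x (v j) <= x (u i) ->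
  e (v i) (v j) -> e (u i) (u j).
Proof.
move=> vj_gt0 vj_le_ui e_vivj; apply: contraTT vj_gt0 => not_e_uiuj.
have beta_le : (beta <= matching_number (move_edge e (u j) (v j) (u i)))%N.
  apply: (beta_le_pairing (cross_pairing_inj (i := i) (j := j) (b := false) pairfun_inj)).
  apply: pairset_cross_sub => //=.
  - by rewrite setUC move_edge_new_edge.
  - rewrite move_edge_old_edge ?edges_set2 1?sym_e //.
    by rewrite !inE negb_or uj_vj eq_sym vi_uj.
  - move=> l _ l_neq_j.
    apply: move_edge_old_edge (pair_at_edges l) _.
    exact: (notin_pair_at pairfun_inj (p := (j, false)) l_neq_j).
rewrite sym_e in not_e_uiuj.
have [_ xvj0 _] := move_edge_eq0 (pairfun_edge j) not_e_uiuj (F_neq (neq_ji false false))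
  vj_le_ui beta_le.
by rewrite xvj0 ltxx.
Qed.

Lemma cross_edges_all_or_none : x (v j) <= x (u i) ->
  [&& e (u i) (u j), e (u i) (v j), e (v i) (u j) & e (v i) (v j)] ||
  [&& ~~ e (u i) (u j), ~~ e (u i) (v j), ~~ e (v i) (u j) & ~~ e (v i) (v j)].
Proof.
move=> vj_le_ui; have := principal_ge0 (v j); rewrite le_eqVlt => /orP [/eqP vj0|vj_gt0].
  by rewrite no_cross_edges_at_zero ?orbT.
have up b : e (u i) (F (j, b)) -> e (v i) (F (j, b)) := cross_edge_up vj_gt0 vj_le_ui.
have swap_t := cross_swap_true vj_gt0 vj_le_ui; have swap_f := cross_swap_false vj_gt0 vj_le_ui.
(* The four cross edges imply one another cyclically. *)
case E1: (e (u i) (u j)).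
  have E3 := up false E1; have E2 := swap_t E3.
  by rewrite E2 E3 (up true E2).
have E4 := contraFN swap_f E1; have E2 := contra (up true) E4.
by rewrite E2 E4 (contra swap_t E2) orbT.
Qed.

Let uj_lt_vi_of_ui_lt_vj : x (u i) < x (v j) -> x (u j) < x (v i).
Proof.
move=> ui_lt_vj; have [vj_le_vi ui_le] := proper_ordering_le ordering (ltnW i_lt_j).
rewrite ltNge; apply/negP => vi_le_uj.
have vi_vj_eq : x (v i) = x (v j).
  by apply/eqP; rewrite eq_le vj_le_vi (le_trans vi_le_uj x_uj_vj).
by have := ui_le vi_vj_eq; rewrite leNgt (lt_le_trans ui_lt_vj (le_trans vj_le_vi vi_le_uj)).
Qed.

(* Exchange u_i v_i, u_j v_j for u_i u_j, v_i v_j. *)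
Lemma exchange_rayleigh_le : ~~ e (u i) (u j) -> ~~ e (v i) (v j) ->
  qs - (x (v i) + x (u i)) ^+ 2 + (x (v i) + x (v j)) ^+ 2
     - (x (u j) + x (v j)) ^+ 2 + (x (u j) + x (u i)) ^+ 2 <= qs.
Proof.
move=> not_uiuj not_vivj.
pose e1 := move_edge e (v i) (u i) (v j); pose e2 := move_edge e1 (u j) (v j) (u i).
have e_viui : e (v i) (u i) by rewrite sym_e pairfun_edge.
have ge1 : simple_graph e1 := move_edge_simple (u i) ge vi_vj.
have [sym_e1 _] := ge1.
have e1_ujvj : e1 (u j) (v j).
  rewrite -edges_set2 //; apply: move_edge_old_edge; first by rewrite edges_set2 ?pairfun_edge.
  by rewrite !inE negb_or vi_uj vi_vj.
have not_e1_ujui : ~~ e1 (u j) (u i).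
  rewrite -edges_set2 // edges_move_edge in_setU1 in_setD1 edges_set2 // sym_e.
  by rewrite (negbTE not_uiuj) andbF orbF set2_eq negb_or !negb_and ui_vj ui_vi !orbT.
have uj_ui : u j != u i by rewrite eq_sym.
have ge2 : simple_graph e2 := move_edge_simple (v j) ge1 uj_ui.
have card_e2 : #|edges e2| = m.
  by rewrite (card_edges_move_edge sym_e1 e1_ujvj not_e1_ujui) card_edges_move_edge.
have beta_le2 : (beta <= matching_number e2)%N.
  apply: (beta_le_pairing (cross_pairing_inj (i := i) (j := j) (b := false) pairfun_inj)).
  apply: pairset_cross_sub; first exact: i_neq_j.
  - by rewrite setUC move_edge_new_edge.
  - apply: move_edge_old_edge; first by rewrite setUC move_edge_new_edge.
    by rewrite !inE negb_or uj_vj eq_sym vi_uj.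
  - move=> l l_neq_i l_neq_j; apply: move_edge_old_edge.
      apply: move_edge_old_edge; first exact: pair_at_edges.
      exact: (notin_pair_at pairfun_inj (p := (i, true)) l_neq_i).
    exact: (notin_pair_at pairfun_inj (p := (j, false)) l_neq_j).
have := mweight_le_qs ge2 card_e2 beta_le2.
rewrite (mweight_move_edge X ge1 e1_ujvj not_e1_ujui uj_ui).
by rewrite (mweight_move_edge X ge e_viui not_vivj vi_vj) principal_mweight.
Qed.

Lemma le_of_2K2 : is_2K2 e S -> x (v j) <= x (u i).
Proof.
move=> is2K2; rewrite leNgt; apply/negP => ui_lt_vj.
have no_cross := is_2K2_no_cross sym_e (pairfun_edge i) (pairfun_edge j)
  ui_uj ui_vj vi_uj vi_vj _ _ is2K2.
have := exchange_rayleigh_le (no_cross _ _ (set21 _ _) (set21 _ _))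
  (no_cross _ _ (set22 _ _) (set22 _ _)).
have := sq_sum_swap_lt ui_lt_vj (uj_lt_vi_of_ui_lt_vj ui_lt_vj); lra.
Qed.

Lemma le_of_K4 : is_K4 e S -> x (v j) <= x (u i).
Proof.
(* The exchange of le_of_2K2 now yields a heavier maximum matching. *)
move=> isK4; rewrite leNgt; apply/negP => ui_lt_vj.
have K4_adj := is_K4_adj sym_e irr_e ui_vi ui_uj ui_vj vi_uj vi_vj uj_vj isK4.
have e_uiuj : e (u i) (u j) by apply: K4_adj; rewrite ?ui_uj // !inE eqxx ?orbT.
have e_vjvi : e (v j) (v i) by apply: K4_adj; rewrite 1?eq_sym ?vi_vj // !inE eqxx ?orbT.
pose G := cross_pairing F i j false.
have G_inj : injective G := cross_pairing_inj pairfun_inj.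
have G_edges : pairset G \subset edges e.
  by apply: pairset_cross_sub; rewrite ?edges_set2 //= => l _ _; apply: pair_at_edges.
have G_max : max_matching e (pairset G).
  by rewrite /max_matching matching_pairset // card_pairset // k_eq eqxx.
have := proj2 Ms_extremal _ G_max; rewrite Ms_pairset -subr_le0.
have /= -> := mweight_cross_pairing false pairfun_inj i_neq_j X.
have vj_vi : v j != v i by rewrite eq_sym.
rewrite /pair_at (sum_set2 _ ui_uj) (sum_set2 _ vj_vi) (sum_set2 _ ui_vi) (sum_set2 _ uj_vj).
have := sq_sum_swap_lt ui_lt_vj (uj_lt_vi_of_ui_lt_vj ui_lt_vj); lra.
Qed.

Lemma le_iff_2K2_or_K4 : x (v j) <= x (u i) <-> is_2K2 e S \/ is_K4 e S.
Proof.
split=> [/cross_edges_all_or_none /orP [] /and4P [E1 E2 E3 E4]|[]].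
- right; exact: is_K4_of_all_cross sym_e irr_e (pairfun_edge i) (pairfun_edge j)
    ui_vi ui_uj ui_vj vi_uj vi_vj uj_vj E1 E2 E3 E4.
- left; exact: is_2K2_of_no_cross sym_e irr_e (pairfun_edge i) (pairfun_edge j)
    ui_vi ui_uj ui_vj vi_uj vi_vj uj_vj E1 E2 E3 E4.
- exact: le_of_2K2.
- exact: le_of_K4.
Qed.

End TwoMatchingEdges.

End Ordering.

End ExtremalGraph.

Theorem lemma2p3 (R : realType) (m beta n : nat) (e : rel 'I_n) (qs : R)
    (X : 'cV[R]_n) (Ms : {set {set 'I_n}}) (k : nat) (u v : 'I_k -> 'I_n) :
  (1 <= beta <= m)%N ->
  simple_graph e -> #|edges e| = m -> (beta <= matching_number e)%N ->
  is_q e qs ->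
  (forall (n' : nat) (e' : rel 'I_n') (q' : R),
      simple_graph e' -> #|edges e'| = m -> (beta <= matching_number e')%N ->
      is_q e' q' -> q' <= qs) ->
  principal_eigvec e qs X ->
  extremal_matching e X Ms ->
  k = matching_number e ->
  proper_ordering X Ms u v ->
  (2 <= matching_number e)%N ->
  forall i j : 'I_k, (i < j)%N ->
    (X (v j) 0 <= X (u i) 0 <->
     is_2K2 e [set u i; v i; u j; v j] \/ is_K4 e [set u i; v i; u j; v j]).
Proof.
move=> _ ge card_e beta_le _ qs_max X_principal Ms_extremal k_eq ordering _ i j i_lt_j.
have beta_le_k : (beta <= k)%N by rewrite k_eq.
exact (le_iff_2K2_or_K4 ge card_e qs_max X_principal beta_le_k Ms_extremal k_eq ordering i_lt_j).
Qed.
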